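(* Let $n\le -1$ be an odd integer with $3\nmid n$. Then the reductions modulo $3$ of $g_n$ and its derivative $g_n'=dg_n/dv$ have no common factor in $\mathbb{F}_3[v]$; that is, $g_n$ is squarefree modulo $3$.
   Context: Let $a=v^2+v-1$ and $B=(v^2-1)(v^2-v-1)$. For odd $n\le -1$ with $k=(1-n)/2$, define $g_n$ by $g_n=\big[(a+b)^k-(a-b)^k-(a+b)^{k+2}+(a-b)^{k+2}\big]/b$, where $b$ is a formal square root of $B$; the expression is a polynomial in $a$ and $b^2=B$, hence $g_n\in\mathbb{Z}[v]$. *)

From HB Require Import structures.
From mathcomp Require Import all_boot all_order all_algebra.
Set Implicit Arguments. Unset Strict Implicit. Unset Printing Implicit Defensive.
Import Order.TTheory GRing.Theory Num.Theory.
Local Open Scope ring_scope.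

Definition pa : {poly int} := 'X^2 + 'X - 1.
Definition pB : {poly int} := ('X^2 - 1) * ('X^2 - 'X - 1).

(* [(a+b)^m - (a-b)^m] / b, expanded by the binomial theorem with b^2 = B:
   (a+b)^m - (a-b)^m = 2 * sum_{j odd} C(m,j) a^(m-j) b^j, so dividing by b
   gives 2 * sum_i C(m,2i+1) a^(m-2i-1) B^i  (terms with 2i+1 > m vanish). *)
Definition oddpart (m : nat) : {poly int} :=
  2%:R * \sum_(i < m.+1) ('C(m, i.*2.+1))%:R * pa ^+ (m - i.*2.+1) * pB ^+ i.

(* g_n for odd n <= -1, with k = (1 - n)/2:
   g_n = [(a+b)^k-(a-b)^k-(a+b)^(k+2)+(a-b)^(k+2)]/b *)
Definition kof (n : int) : nat := (`|1 - n|%N)./2.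
Definition g (n : int) : {poly int} := oddpart (kof n) - oddpart (kof n).+2.

Definition red3 (p : {poly int}) : {poly 'F_3} := map_poly (fun z : int => z%:~R) p.

From HB Require Import structures.
From mathcomp Require Import all_boot all_order all_algebra.
From Stdlib Require Import Ring.
From Stdlib Require ZArith.
(* Stdlib's [ring] is captured here, before MathComp's [ring] shadows it: unlike
   the latter it can be instantiated with a coefficient morphism Z -> F_3[X]
   that identifies integers congruent mod 3 (see [poly3_ring] below). *)
Ltac stdlib_ring := ring.
From mathcomp Require Import ring zify.
Import Order.TTheory GRing.Theory Num.Theory.
Set Implicit Arguments. Unset Strict Implicit.
Local Open Scope ring_scope.

(* Write k = (1 - n)/2, so k >= 1 and k is not 2 mod 3.  By the binomial theorem
   ((a+b)^m - (a-b)^m)/b = 2 O_m, where O_m is a Chebyshev-like sequence with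
   O_{m+2} = 2a O_{m+1} - (a^2 - B) O_m.  Mod 3 this becomes, for u_m := 2 O_m,
       u_0 = 0,  u_1 = -1,  u_{m+2} = -A u_{m+1} - X^2 u_m      (A = X^2+X-1),
   and g_n reduces to G := u_k - u_{k+2} = W u_k + A u_{k+1}    (W = 1+X^2).
   Two identities drive the proof: the Cassini identity
       u_{m+1}^2 + A u_{m+1} u_m + X^2 u_m^2 = X^(2m)
   and a derivative identity X (B u_m' - B' u_m) = m (W u_{m+1} + C u_m).
   A common factor d of G and G' is coprime to X (as G'(0) = 1) and to X^2 - 1
   (Cassini gives X^(2k) = G^2 + (X^2-1) S).  It divides X (B G' - B' G), which
   for k = 0, 1 mod 3 is a combination r u_k + s u_{k+1}; eliminating u_k, u_{k+1}
   with Cassini shows d | (W s - A r)^2 X^(2k), and W s - A r divides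
   (X (X^2 - 1))^3, so d is a unit. *)

(* Binomial sums: [oddsum a B m] is ((a+b)^m - (a-b)^m) / (2b) when b^2 = B, and
   [evensum a B m] is ((a+b)^m + (a-b)^m) / 2. *)
Section BinomialSums.
Variables (R : comNzRingType) (a B : R).

Definition oddsum (m : nat) : R :=
  \sum_(i < m.+1) 'C(m, i.*2.+1)%:R * a ^+ (m - i.*2.+1) * B ^+ i.
Definition evensum (m : nat) : R :=
  \sum_(i < m.+1) 'C(m, i.*2)%:R * a ^+ (m - i.*2) * B ^+ i.

(* Multiplying (a + b)^m by a + b, separated into b-free and b-parts. *)
Lemma oddsumS m : oddsum m.+1 = a * oddsum m + evensum m.
Proof.
rewrite /oddsum big_ord_recr /= bin_small; last first.
  by rewrite doubleS ltnS leqW // -addnn leq_addr.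
rewrite !mul0r addr0.
under eq_bigr => i _ do rewrite binS natrD subSS !mulrDl.
rewrite big_split /=; congr (_ + _).
rewrite mulr_sumr; apply: eq_bigr => i _.
case: (leqP i.*2.+1 m) => h; first by rewrite -(subnSK h) exprS mulrCA !mulrA.
by rewrite bin_small // !mul0r mulr0.
Qed.

Lemma evensumS m : evensum m.+1 = a * evensum m + B * oddsum m.
Proof.
rewrite /evensum big_ord_recl /= bin0 subn0 mul1r expr0 mulr1.
under eq_bigr => i _ do rewrite /bump leq0n add1n doubleS binS natrD subSS !mulrDl.
rewrite big_split /= addrA; congr (_ + _).
  rewrite big_ord_recr /= (@bin_small m m.*2.+2); last first.
    by rewrite -addnn ltnS leqW // leq_addr.
  rewrite !mul0r addr0 mulr_sumr big_ord_recl /= bin0 subn0 mul1r expr0 mulr1 -exprS.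
  congr (_ + _); apply: eq_bigr => i _.
  rewrite /bump leq0n add1n doubleS.
  case: (leqP i.*2.+2 m) => h; first by rewrite -(subnSK h) exprS mulrCA !mulrA.
  by rewrite bin_small // !mul0r mulr0.
by rewrite /oddsum mulr_sumr; apply: eq_bigr => i _; rewrite exprS mulrCA.
Qed.

(* Eliminating [evensum]: the linear recurrence of (x^m - y^m)/(x - y) for the
   roots x, y = a +- b of T^2 - 2aT + (a^2 - B). *)
Lemma oddsumSS m : oddsum m.+2 = 2%:R * a * oddsum m.+1 - (a ^+ 2 - B) * oddsum m.
Proof.
have Eeven : evensum m = oddsum m.+1 - a * oddsum m by rewrite oddsumS addrC addKr.
rewrite oddsumS evensumS Eeven; ring.
Qed.

End BinomialSums.

(* In a commutative ring of characteristic 3, the canonical map Z -> R identifies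
   integers that are congruent mod 3; this is the coefficient morphism that lets
   [ring] decide identities mod 3. *)
Section CharacteristicThree.
Import ZArith.
Variable R : comNzRingType.

Lemma comring_theory : @ring_theory R 0 1 +%R *%R (fun x y => x + - y) -%R eq.
Proof.
split=> //; [exact: add0r|exact: addrC|exact: addrA|exact: mul1r|exact: mulrC
            |exact: mulrA|exact: mulrDl|exact: subrr].
Qed.

Hypothesis R_char3 : 3%:R = 0 :> R.

Definition int_to_char3 : Z -> R := gen_phiZ 0 1 +%R *%R -%R.

Lemma char3_ring_morph : ring_morph (0 : R) 1 +%R *%R (fun x y => x + - y) -%R eq
  0%Z 1%Z Z.add Z.mul Z.sub Z.opp (fun x y => Z.eqb ((x - y) mod 3) 0) int_to_char3.
Proof.
have [h0 h1 hD hB hM hN _] :=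
  gen_phiZ_morph (Eqsth R) (Eq_ext +%R *%R -%R) comring_theory.
split=> // x y /Z.eqb_eq xy3.
have := Z.div_mod (x - y) 3; rewrite xy3 Z.add_0_r => /(_ ltac:(discriminate)) xy.
have -> : x = (y + 3 * ((x - y) / 3))%Z by rewrite -xy Z.add_comm Z.sub_add.
rewrite /int_to_char3 hD hM /=.
have -> : 1 + (1 + 1) = 0 :> R by rewrite -R_char3 !mulrS mulr0n addr0.
by rewrite mul0r addr0.
Qed.

End CharacteristicThree.

Lemma F3_char : 3%:R = 0 :> 'F_3. Proof. exact/val_inj. Qed.
Lemma poly3_char : 3%:R = 0 :> {poly 'F_3}.
Proof. by rewrite -polyC_natr F3_char. Qed.

(* [ring] recognises the ring operations syntactically, so identities in F_3[X]
   are decided through named aliases for its carrier, operations, 'X and the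
   constants n%:R: the tactic [ring3] folds a goal into these aliases (expanding
   numerals and constant powers first) and calls the characteristic-3 [ring]. *)
Definition poly3 : Type := {poly 'F_3}.
Definition poly3_zero : poly3 := 0.
Definition poly3_one : poly3 := 1.
Definition poly3_add (p q : poly3) : poly3 := p + q.
Definition poly3_mul (p q : poly3) : poly3 := p * q.
Definition poly3_opp (p : poly3) : poly3 := - p.
Definition poly3_X : poly3 := 'X.
Definition poly3_nat (n : nat) : poly3 := n%:R.

Section Poly3Ring.
Import ZArith.

Definition poly3_ring_theory : ring_theory poly3_zero poly3_one poly3_add poly3_mul
    (fun p q => poly3_add p (poly3_opp q)) poly3_opp eq :=
  comring_theory {poly 'F_3}.

Definition poly3_ring_morph : ring_morph poly3_zero poly3_one poly3_add poly3_mul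
    (fun p q => poly3_add p (poly3_opp q)) poly3_opp eq
    0%Z 1%Z Z.add Z.mul Z.sub Z.opp (fun x y => Z.eqb ((x - y) mod 3) 0)
    (gen_phiZ poly3_zero poly3_one poly3_add poly3_mul poly3_opp) :=
  char3_ring_morph poly3_char.

End Poly3Ring.

Add Ring poly3_ring : poly3_ring_theory (morphism poly3_ring_morph).

Lemma poly3_cast (p q : poly3) : p = q -> p = q. Proof. by []. Qed.
Lemma poly3_addE (p q : {poly 'F_3}) : p + q = poly3_add p q. Proof. by []. Qed.
Lemma poly3_mulE (p q : {poly 'F_3}) : p * q = poly3_mul p q. Proof. by []. Qed.
Lemma poly3_oppE (p : {poly 'F_3}) : - p = poly3_opp p. Proof. by []. Qed.
Lemma poly3_zeroE : 0 = poly3_zero. Proof. by []. Qed.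
Lemma poly3_oneE : 1 = poly3_one. Proof. by []. Qed.
Lemma poly3_XE : 'X = poly3_X. Proof. by []. Qed.
Lemma poly3_natE n : n%:R = poly3_nat n :> {poly 'F_3}. Proof. by []. Qed.
Definition poly3E :=
  (poly3_addE, poly3_mulE, poly3_oppE, poly3_zeroE, poly3_oneE, poly3_XE).

Ltac ring3 := apply: poly3_cast;
  rewrite ?exprS ?expr0 ?mulrS ?mulr0n ?poly3_natE ?poly3E; stdlib_ring.

Definition a3 : {poly 'F_3} := 'X^2 + 'X - 1.
Definition b3 : {poly 'F_3} := ('X^2 - 1) * ('X^2 - 'X - 1).
Definition w3 : {poly 'F_3} := 1 + 'X^2.
Definition c3 : {poly 'F_3} := 'X^3 + 'X^2 - 1.

Lemma red3B : {morph red3 : p q / p - q}.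
Proof. by move=> p q; rewrite /red3 rmorphB. Qed.
Lemma red3M : {morph red3 : p q / p * q}.
Proof. by move=> p q; rewrite /red3 rmorphM. Qed.
Lemma red3_nat n : red3 n%:R = n%:R.
Proof. by rewrite /red3 rmorph_nat. Qed.
Lemma red3_deriv p : red3 p^`() = (red3 p)^`().
Proof. by rewrite /red3 deriv_map. Qed.

Lemma red3_pa : red3 pa = a3.
Proof. by rewrite /red3 /pa !rmorphB rmorphD rmorphXn /= map_polyX rmorph1. Qed.
Lemma red3_pB : red3 pB = b3.
Proof. by rewrite /red3 /pB !(rmorphM, rmorphB, rmorphXn) /= map_polyX rmorph1. Qed.

Definition u3 (m : nat) : {poly 'F_3} := red3 (oddpart m).

(* u_m = 2 O_m: its initial values, and its recurrence obtained by reducing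
   [oddsumSS] mod 3, where 2a = -A and a^2 - B = 3X^3 + X^2 - 3X = X^2. *)
Lemma u3E m : u3 m = 2%:R * red3 (oddsum pa pB m).
Proof. by rewrite /u3 /oddpart red3M red3_nat. Qed.

Lemma u3_0 : u3 0 = 0.
Proof. by rewrite /u3 /oddpart big_ord1 bin_small // !mul0r mulr0 /red3 map_poly0. Qed.

Lemma u3_1 : u3 1 = -1.
Proof.
rewrite u3E /oddsum big_ord_recr big_ord1 /= bin1 (@bin_small 1 3) //.
rewrite subnn !mul0r addr0 !mulr1 /red3 rmorph1; ring3.
Qed.

Lemma u3_rec m : u3 m.+2 = - (a3 * u3 m.+1) - 'X^2 * u3 m.
Proof.
rewrite !u3E oddsumSS expr2 red3B !red3M [red3 (_ - pB)]red3B red3M red3_nat.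
by rewrite red3_pa red3_pB /a3 /b3; ring3.
Qed.

Lemma deriv_a3 : a3^`() = 'X *+ 2 + 1.
Proof. by rewrite /a3 derivB derivD derivXn derivX -polyC1 derivC subr0. Qed.

Lemma deriv_b3 : b3^`() = 'X *+ 2 * ('X^2 - 'X - 1) + ('X^2 - 1) * ('X *+ 2 - 1).
Proof.
by rewrite /b3 derivM !derivB derivXn derivX -polyC1 derivC !subr0.
Qed.

Lemma deriv_u3_rec m :
  (u3 m.+2)^`() = - (a3^`() * u3 m.+1 + a3 * (u3 m.+1)^`())
                  - ('X *+ 2 * u3 m + 'X^2 * (u3 m)^`()).
Proof.
by rewrite u3_rec derivB derivN [(a3 * _)^`()]derivM [(_ * u3 m)^`()]derivM derivXn.
Qed.

(* Cassini identity: the "norm" of (u_{m+1}, u_m) is X^(2m) = (X^2)^m, since the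
   recurrence has determinant X^2. *)
Lemma u3_cassini m :
  u3 m.+1 ^+ 2 + a3 * u3 m.+1 * u3 m + 'X^2 * u3 m ^+ 2 = 'X ^+ m.*2.
Proof.
elim: m => [|m IH]; first by rewrite u3_1 u3_0 expr0; ring3.
rewrite u3_rec doubleS !exprS -IH /a3; ring3.
Qed.

Lemma rec2_eq0 (R : pzRingType) (f : nat -> R) (c0 c1 : R) :
  f 0 = 0 -> f 1 = 0 -> (forall m, f m.+2 = c1 * f m.+1 + c0 * f m) ->
  forall m, f m = 0.
Proof.
move=> f0 f1 fS m; suff : f m = 0 /\ f m.+1 = 0 by case.
elim: m => [|m [fm fm1]]; first by [].
by rewrite fS fm fm1 !mulr0 addr0.
Qed.

(* The derivative identity: its defect satisfies the recurrence of u_m, hence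
   vanishes. *)
Lemma u3_deriv m :
  'X * (b3 * (u3 m)^`() - b3^`() * u3 m) = m%:R * (w3 * u3 m.+1 + c3 * u3 m).
Proof.
apply/eqP; rewrite -subr_eq0; apply/eqP; move: m.
apply: (@rec2_eq0 _ _ (- 'X^2) (- a3)).
- by rewrite u3_0 deriv0; ring3.
- rewrite u3_rec u3_1 u3_0 derivN -polyC1 derivC polyC1 oppr0 deriv_b3.
  by rewrite /a3 /b3 /w3 /c3; ring3.
- move=> m; rewrite deriv_u3_rec (u3_rec m.+1) u3_rec deriv_a3 deriv_b3.
  by rewrite /a3 /b3 /w3 /c3; ring3.
Qed.

Lemma u3_at0 m : (u3 m.+1).[0] = -1.
Proof.
elim: m => [|m IH]; first by rewrite u3_1 hornerN hornerC.
by rewrite u3_rec !hornerE IH; ring.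
Qed.

Lemma deriv_u3_at0 m : ((u3 m.+1)^`()).[0] = m%:R.
Proof.
elim: m => [|m IH]; first by rewrite u3_1 derivN -polyC1 derivC oppr0 horner0.
by rewrite deriv_u3_rec deriv_a3 !hornerE IH u3_at0; ring.
Qed.

Definition g3 (k : nat) : {poly 'F_3} := u3 k - u3 k.+2.

Lemma g3E k : g3 k = w3 * u3 k + a3 * u3 k.+1.
Proof. by rewrite /g3 u3_rec /w3; ring3. Qed.

Lemma coprimep_sqr_comb (F : fieldType) (g h s c : {poly F}) :
  c = s * h + g ^+ 2 -> coprimep h c -> coprimep g h.
Proof.
by move=> ->; rewrite coprimep_addl_mul expr2 coprimepMr andbb coprimep_sym.
Qed.

(* Mod 3, Cassini reads X^(2k) = G^2 + (X^2 - 1) S, so G has no root +-1. *)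
Lemma g3_coprime_X2sub1 k : coprimep (g3 k) ('X^2 - 1).
Proof.
pose S := - 'X * ('X - 1) * u3 k.+1 ^+ 2 + a3 * u3 k.+1 * u3 k
          - ('X^2 - 1) * u3 k ^+ 2.
have cassini : 'X ^+ k.*2 = S * ('X^2 - 1) + g3 k ^+ 2.
  by rewrite -u3_cassini g3E /S /w3 /a3; ring3.
apply: (coprimep_sqr_comb cassini); apply: coprimep_expr.
by rewrite coprimepX rootE !hornerE expr0n sub0r oppr_eq0 oner_eq0.
Qed.

(* G_{k+1}'(0) = k - (k + 2) = 1, so X does not divide G'. *)
Lemma g3_deriv_coprimeX k : coprimep (g3 k.+1)^`() 'X.
Proof.
rewrite coprimepX rootE /g3 derivB hornerD hornerN !deriv_u3_at0.
by rewrite -[k.+2]addn2 natrD opprD addrA subrr add0r.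
Qed.

(* X (B G' - B' G), divisible by every common factor of G and G'. *)
Definition g3_wronskian (k : nat) : {poly 'F_3} :=
  'X * (b3 * (g3 k)^`() - b3^`() * g3 k).

Lemma g3_wronskianE k : g3_wronskian k =
  k%:R * (w3 * u3 k.+1 + c3 * u3 k) - k.+2%:R * (w3 * u3 k.+3 + c3 * u3 k.+2).
Proof. by rewrite -!u3_deriv /g3_wronskian /g3 derivB; ring. Qed.

Lemma natr_mod3 n : n%:R = ((n %% 3)%N)%:R :> {poly 'F_3}.
Proof. by rewrite {1}(divn_eq n 3) natrD natrM poly3_char mulr0 add0r. Qed.

(* For k = 0, 1 mod 3 one of the two terms of [g3_wronskianE] vanishes, giving a
   combination r u_k + s u_{k+1} whose determinant W s - A r against G divides
   (X (X^2 - 1))^3. *)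
Lemma g3_wronskian_decomp k : (k %% 3 != 2)%N ->
  exists r s, g3_wronskian k = r * u3 k + s * u3 k.+1
              /\ w3 * s - a3 * r %| ('X * ('X^2 - 1)) ^+ 3.
Proof.
move=> k_mod3; rewrite g3_wronskianE (natr_mod3 k) (natr_mod3 k.+2).
have -> : (k.+2 %% 3 = (k %% 3 + 2) %% 3)%N by rewrite -addn2 modnDml.
move: k_mod3 (ltn_mod k 3); case: (k %% 3)%N => [|[|[|r]]] // _ _.
- exists ('X^2 * (w3 * a3 - c3)), (w3 * (a3 ^+ 2 - 'X^2) - c3 * a3); split.
    by rewrite (u3_rec k.+1) u3_rec; ring3.
  apply/dvdpP; exists ('X^2 * ('X - 1) ^+ 2).
  by rewrite /w3 /a3 /c3; ring3.
- exists c3, w3; split; first by ring3.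
  apply/dvdpP; exists (- 'X^2 * ('X + 1) ^+ 2).
  by rewrite /w3 /a3 /c3; ring3.
Qed.

(* Cramer elimination: a common divisor of w p + a q and r p + s q divides
   (w s - a r)^2 times any binary quadratic form q^2 + a q p + c p^2. *)
Lemma dvdp_elim (F : fieldType) (d p q w a r s c : {poly F}) :
  d %| w * p + a * q -> d %| r * p + s * q ->
  d %| (w * s - a * r) ^+ 2 * (q ^+ 2 + a * q * p + c * p ^+ 2).
Proof.
set G := w * p + a * q; set E := r * p + s * q => dG dE.
have -> : (w * s - a * r) ^+ 2 * (q ^+ 2 + a * q * p + c * p ^+ 2) =
  (w * E - r * G) * (w * E - r * G) + a * (w * E - r * G) * (s * G - a * E)
  + c * (s * G - a * E) * (s * G - a * E) by rewrite /G /E; ring.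
have dQ : d %| w * E - r * G by rewrite dvdp_sub ?dvdp_mull.
have dP : d %| s * G - a * E by rewrite dvdp_sub ?dvdp_mull.
by rewrite !dvdp_add ?dvdp_mull ?dvdp_mulr.
Qed.

Lemma g3_squarefree k :
  (0 < k)%N -> (k %% 3 != 2)%N -> coprimep (g3 k) (g3 k)^`().
Proof.
case: k => // k _ k_mod3; apply/coprimepP => d dG dG'.
have dX : coprimep d 'X := coprimep_dvdr dG' (g3_deriv_coprimeX k).
have dX2 : coprimep d ('X^2 - 1) := coprimep_dvdr dG (g3_coprime_X2sub1 k.+1).
have [r [s [Er Ddvd]]] := g3_wronskian_decomp k_mod3.
have dE : d %| r * u3 k.+1 + s * u3 k.+2.
  by rewrite -Er /g3_wronskian dvdp_mull // dvdp_sub // dvdp_mull.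
have dD : d %| (w3 * s - a3 * r) ^+ 2 * 'X ^+ k.+1.*2.
  by rewrite -u3_cassini; apply: dvdp_elim dE; rewrite -g3E.
have cD : coprimep d ((w3 * s - a3 * r) ^+ 2 * 'X ^+ k.+1.*2).
  rewrite coprimepMr (coprimep_expr _ dX) andbT.
  apply: coprimep_dvdl (dvdp_exp2r 2 Ddvd) _.
  by rewrite -exprM coprimep_expr // coprimepMr dX.
exact: (coprimepP _ _ cD d (dvdpp d) dD).
Qed.

Lemma kof_double (n : int) : n <= -1 -> odd `|n|%N -> ((kof n).*2)%:Z = 1 - n.
Proof.
move=> n_neg n_odd.
rewrite /kof (_ : `|1 - n|%N = (`|n|%N).+1); last by lia.
by have := odd_double_half (`|n|%N).+1; rewrite /= n_odd add0n => ->; lia.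
Qed.

Lemma kof_range (n : int) : n <= -1 -> odd `|n|%N -> ~~ (3 %| n)%Z ->
  (0 < kof n)%N /\ (kof n %% 3 != 2)%N.
Proof.
move=> n_neg n_odd n3; have := kof_double n_neg n_odd.
move: (kof n) => k e; split; first by lia.
by apply: contra n3 => k2; lia.
Qed.

Theorem proposition5p7 (n : int) :
  n <= -1 -> odd `|n|%N -> ~~ (3 %| n)%Z ->
  coprimep (red3 (g n)) (red3 (g n)^`()).
Proof.
move=> n_neg n_odd n3; have [k_pos k_mod3] := kof_range n_neg n_odd n3.
by rewrite red3_deriv /g red3B; apply: g3_squarefree.
Qed.
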